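(* Let $k$ be an algebraically closed field, $P=k[X_1,\ldots,X_n]$, $\mathfrak t=\langle X_1,\ldots,X_n\rangle$, and $M$ a Noetherian $P$-module with $x_i$ the action of $X_i$ on $M$. For $r\ge1$ let $M^{(r)}=P/\mathfrak t^r\otimes_kM$ (a $k$-space isomorphic to $M^{\binom{r+n-1}{n}}$) with the commuting $k$-linear operators $x_i^{(r)}=1\otimes x_i-X_i\otimes1$, making $M^{(r)}$ a $P$-module via $X_i\mapsto x_i^{(r)}$; put $x^{(r)}=(x^{(r)}_1,\ldots,x^{(r)}_n)$. Then $M^{(r)}$ is a Noetherian $P$-module, $\sigma(x^{(r)},M^{(r)})=\sigma(x,M)$ for all $r\ge1$, and $\dim_kH_p(x^{(r)}-a,M^{(r)})<\infty$ for all $p$, all $a\in k^n$ and all $r\ge1$ (i.e. $i(x^{(r)}-a)<\infty$).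
   Context: For a commutative $k$-algebra $R$, an $R$-module $M$ and an $n$-tuple $y$ in $R$, the Koszul complex $\operatorname{Kos}(y,M)$ is $0\leftarrow M\leftarrow M\otimes_k\wedge^1k^n\leftarrow\cdots\leftarrow M\otimes_k\wedge^nk^n\leftarrow 0$ with differential $\partial(u\otimes e_{i_1}\wedge\cdots\wedge e_{i_p})=\sum_{s=1}^p(-1)^{s+1}y_{i_s}u\otimes e_{i_1}\wedge\cdots\wedge\widehat{e_{i_s}}\wedge\cdots\wedge e_{i_p}$, with homology $H_p(y,M)$. For $a\in k^n$, $y-a=(y_1-a_1,\ldots,y_n-a_n)$. Taylor spectrum $\sigma(y,M)$: the set of $a\in k^n$ with $\operatorname{Kos}(y-a,M)$ not exact. Index: $i(y)=\sum_{p=0}^n(-1)^{p+1}\dim_kH_p(y,M)$, with $i(y)<\infty$ meaning all dimensions are finite. *)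

From HB Require Import structures.
From mathcomp Require Import all_boot all_order all_algebra.
Set Implicit Arguments. Unset Strict Implicit. Unset Printing Implicit Defensive.
Import Order.TTheory GRing.Theory.
Local Open Scope ring_scope.

Section Koszul.
Variables (k : fieldType) (V : lmodType k) (n : nat).

(* M (x) /\^p k^n is encoded by chains C := {ffun {set 'I_n} -> V}
   supported on p-element subsets; f S is the coefficient of e_S
   (e_S = e_{i_1} /\ ... /\ e_{i_p}, i_1 < ... < i_p listing S). *)
Definition chain := {ffun {set 'I_n} -> V}.

Definition is_deg (p : nat) (f : chain) : Prop :=
  forall S : {set 'I_n}, #|S| != p -> f S = 0.

(* Koszul differential: d(u e_{i_1..i_p}) = sum_s (-1)^(s+1) y_{i_s} u e_{..^i_s..};
   the coefficient of e_T in d f collects s \notin T, s at (1-based) position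
   #{t in T | t < s} + 1 in T :|: [set s]. *)
Definition kdiff (y : 'I_n -> V -> V) (f : chain) : chain :=
  [ffun T : {set 'I_n} =>
     \sum_(s : 'I_n | s \notin T)
        ((-1) ^+ #|[set t in T | (t < s)%N]| : k) *: y s (f (s |: T))].

Definition kcycle (y : 'I_n -> V -> V) (p : nat) (z : chain) : Prop :=
  is_deg p z /\ kdiff y z = 0.

Definition kboundary (y : 'I_n -> V -> V) (p : nat) (z : chain) : Prop :=
  exists g : chain, is_deg p.+1 g /\ kdiff y g = z.

Definition koszul_exact (y : 'I_n -> V -> V) : Prop :=
  forall (p : nat) (z : chain), kcycle y p z -> kboundary y p z.

(* dim_k H_p(y,V) < oo : finitely many cycles span cycles modulo boundaries *)
Definition homology_findim (y : 'I_n -> V -> V) (p : nat) : Prop :=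
  exists (m : nat) (c : 'I_m -> chain),
    (forall j, kcycle y p (c j)) /\
    forall z, kcycle y p z ->
      exists (lam : 'I_m -> k) (g : chain),
        is_deg p.+1 g /\ z = \sum_(j < m) lam j *: c j + kdiff y g.

Definition shift_ops (y : 'I_n -> V -> V) (a : 'I_n -> k) : 'I_n -> V -> V :=
  fun i v => y i v - a i *: v.

Definition taylor_spectrum (y : 'I_n -> V -> V) : (('I_n -> k) -> Prop) :=
  fun a => ~ koszul_exact (shift_ops y a).

(* V with X_i acting by y_i is a P = k[X_1..X_n]-module *)
Definition is_Pmodule (y : 'I_n -> V -> V) : Prop :=
  (forall i (c : k) (u v : V), y i (c *: u + v) = c *: y i u + y i v) /\
  (forall i j (v : V), y i (y j v) = y j (y i v)).

Definition is_Psubmodule (y : 'I_n -> V -> V) (S : V -> Prop) : Prop :=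
  [/\ S 0, (forall u v, S u -> S v -> S (u + v)),
      (forall (c : k) u, S u -> S (c *: u)) & (forall i u, S u -> S (y i u))].

Definition noetherian_Pmodule (y : 'I_n -> V -> V) : Prop :=
  is_Pmodule y /\
  forall S : nat -> V -> Prop,
    (forall m, is_Psubmodule y (S m)) ->
    (forall m v, S m v -> S m.+1 v) ->
    exists N : nat, forall m, (N <= m)%N -> forall v, S m v <-> S N v.

End Koszul.

(* Monomials X^a of P/t^r: exponent vectors a with |a| < r *)
Definition mono (n r : nat) :=
  {a : {ffun 'I_n -> 'I_r} | (\sum_(i < n) (a i : nat) < r)%N}.

Section Mr.
Variables (k : fieldType) (M : lmodType k) (n r : nat).

(* M^(r) = P/t^r (x)_k M : sum_a X^a (x) f a *)
Definition Mr := {ffun mono n r -> M}.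

Definition mono_succ (i : 'I_n) (a b : mono n r) : bool :=
  [forall j : 'I_n, (val (val b j) == val (val a j) + (j == i))%N].

Definition mulX (i : 'I_n) (f : Mr) : Mr :=
  [ffun b : mono n r => \sum_(a : mono n r | mono_succ i a b) f a].

Definition xr (x : 'I_n -> M -> M) (i : 'I_n) (f : Mr) : Mr :=
  [ffun b : mono n r => x i (f b)] - mulX i f.

End Mr.

From HB Require Import structures.
From Stdlib Require Import Classical ClassicalEpsilon.
From mathcomp Require Import all_boot all_order all_algebra zify.
Set Implicit Arguments. Unset Strict Implicit. Unset Printing Implicit Defensive.
Import GRing.Theory.
Local Open Scope ring_scope.

(* Write M^(r) as functions f : mono -> M on the monomials of degree < r.  On
   the coefficient at b, x_i^(r) acts as x_i minus the coefficient at the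
   monomial a with X_i a = b.  Hence for every upward closed set A of
   monomials the functions supported in A form a P-submodule, and removing
   from A a monomial b of minimal degree yields a filtration of M^(r) whose
   successive quotients are copies of (M, x) via f |-> f b.  Everything then
   follows from three extension properties, each proved once in general:
   - the ascending chain condition passes to extensions (acc_ext);
   - exactness of a Koszul complex in degree q passes to extensions
     (exact_ext), so Kos(x-a, M) exact implies Kos(x^(r)-a, M^(r)) exact;
   - if V -> W is a split P-linear surjection, V is exact in degree q and the
     kernel is exact in degree q-1, then W is exact in degree q
     (exact_quotient); applied to f |-> f 1 this gives the converse.
   Finally, for any Noetherian P-module the p-cycles form a finitely generated
   P-submodule of the chains, and y_i kills homology by the Koszul homotopy
   d(e_i /\ z) + e_i /\ d z = y_i z, so H_p is finite dimensional. *)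

Section LinearMaps.
Variables (k : fieldType) (V W : lmodType k).

(* k-linearity, in the single-equation form used by is_Pmodule. *)
Definition linmap (f : V -> W) := forall (c : k) u v, f (c *: u + v) = c *: f u + f v.

Variable f : V -> W.
Hypothesis hf : linmap f.

Lemma linmap0 : f 0 = 0.
Proof.
have /eqP := hf 1 0 0; rewrite scaler0 add0r scale1r eq_sym -subr_eq0 addrK.
by move/eqP.
Qed.

Lemma linmapD u v : f (u + v) = f u + f v.
Proof. by have := hf 1 u v; rewrite !scale1r. Qed.

Lemma linmapZ c u : f (c *: u) = c *: f u.
Proof. by have := hf c u 0; rewrite !addr0 linmap0 addr0. Qed.

Lemma linmapB u v : f (u - v) = f u - f v.
Proof. by rewrite linmapD -scaleN1r linmapZ scaleN1r. Qed.

Lemma linmap_sum (I : Type) (s : seq I) (P : pred I) (F : I -> V) :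
  f (\sum_(i <- s | P i) F i) = \sum_(i <- s | P i) f (F i).
Proof. exact: (big_morph f linmapD linmap0). Qed.

End LinearMaps.

Lemma sign_oddD (R : pzRingType) (e1 e2 : nat) : odd (e1 + e2) ->
  (-1) ^+ e1 = - ((-1) ^+ e2) :> R.
Proof.
rewrite oddD -[LHS]signr_odd -[in RHS]signr_odd.
by case: (odd e1); case: (odd e2); rewrite //= ?expr0 ?expr1 ?opprK.
Qed.

Lemma sum_antisym (W : zmodType) (n : nat) (F : 'I_n -> 'I_n -> W) :
  (forall s, F s s = 0) -> (forall s t, F t s = - F s t) ->
  \sum_s \sum_t F s t = 0.
Proof.
move=> F0 FA.
have -> : \sum_s \sum_t F s t =
   \sum_s \sum_t (F s t *+ (s < t)%N) + \sum_s \sum_t (F s t *+ (t < s)%N).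
  rewrite -big_split; apply: eq_bigr => s _; rewrite -big_split; apply: eq_bigr => t _.
  case: (ltngtP s t) => h /=; rewrite ?mulr1n ?mulr0n ?addr0 ?add0r //.
  by rewrite (val_inj h).
rewrite [X in _ + X]exchange_big /=.
rewrite [X in _ + X](eq_bigr (fun t => - \sum_s (F t s *+ (t < s)%N))).
  by rewrite sumrN subrr.
by move=> t _; rewrite -sumrN; apply: eq_bigr => s _; rewrite FA mulNrn.
Qed.

Section Counting.
Variable n : nat.

Lemma ltn_add_gtn (s t : 'I_n) : s != t -> ((s < t) + (t < s))%N = 1%N.
Proof. by case: (ltngtP s t) => // /val_inj ->; rewrite eqxx. Qed.

(* The number of elements of T below s: the sign exponent of the Koszul
   differential, since e_s /\ e_T = (-1)^(nbelow T s) e_(s |: T). *)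
Definition nbelow (T : {set 'I_n}) (s : 'I_n) := #|[set t in T | (t < s)%N]|.

Lemma nbelowU1 (T : {set 'I_n}) (s t : 'I_n) : s \notin T ->
  nbelow (s |: T) t = (nbelow T t + (s < t))%N.
Proof.
move=> sT; rewrite /nbelow; case: ltnP => h.
  have -> : [set u in s |: T | (u < t)%N] = s |: [set u in T | (u < t)%N].
    by apply/setP => u; rewrite !inE; case: eqP => [->|].
  by rewrite cardsU1 inE (negPf sT) addn1.
have -> : [set u in s |: T | (u < t)%N] = [set u in T | (u < t)%N].
  apply/setP => u; rewrite !inE; case: eqP => [->|//].
  by rewrite ltnNge h /= andbF.
by rewrite addn0.
Qed.

Lemma nbelowD1 (T : {set 'I_n}) (s t : 'I_n) : s \in T ->
  nbelow T t = (nbelow (T :\ s) t + (s < t))%N.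
Proof. by move=> sT; rewrite -nbelowU1 ?setD11 // setD1K. Qed.

End Counting.

Section ChainMaps.
Variables (k : fieldType) (V W : lmodType k) (n : nat).

Definition cmap (p : V -> W) (f : chain V n) : chain W n := [ffun S => p (f S)].

Variable p : V -> W.
Hypothesis hp : linmap p.

Lemma cmap_lin : linmap (cmap p).
Proof. by move=> c f g; apply/ffunP => S; rewrite !ffunE hp. Qed.

Lemma cmap_deg q (f : chain V n) : is_deg q f -> is_deg q (cmap p f).
Proof. by move=> hf S hS; rewrite ffunE hf // (linmap0 hp). Qed.

Lemma kdiff_cmap (y : 'I_n -> V -> V) (w : 'I_n -> W -> W) (T : V -> Prop)
  (f : chain V n) :
  (forall i v, T v -> p (y i v) = w i (p v)) -> (forall S, T (f S)) ->
  kdiff w (cmap p f) = cmap p (kdiff y f).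
Proof.
move=> hi hf; apply/ffunP => S; rewrite !ffunE (linmap_sum hp).
by apply: eq_bigr => s _; rewrite (linmapZ hp) hi // ffunE.
Qed.

End ChainMaps.

Section KoszulDifferential.
Variables (k : fieldType) (V : lmodType k) (n : nat).
Implicit Types (y : 'I_n -> V -> V) (f g : chain V n).

Definition lin_ops y := forall i, linmap (y i).
Definition comm_ops y := forall i j v, y i (y j v) = y j (y i v).

Lemma kdiffE y f T : kdiff y f T =
  \sum_(s : 'I_n | s \notin T) ((-1) ^+ nbelow T s : k) *: y s (f (s |: T)).
Proof. by rewrite ffunE. Qed.

Variable y : 'I_n -> V -> V.
Hypothesis hy : lin_ops y.

Lemma kdiff_lin : linmap (kdiff y).
Proof.
move=> c f g; apply/ffunP => T; rewrite !ffunE scaler_sumr -big_split.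
by apply: eq_bigr => s _; rewrite !ffunE (hy s) scalerDr !scalerA mulrC.
Qed.

Lemma kdiff0 : kdiff y 0 = 0.
Proof. exact: linmap0 kdiff_lin. Qed.

Lemma kdiff_deg p f : is_deg p.+1 f -> is_deg p (kdiff y f).
Proof.
move=> hf T hT; rewrite kdiffE big1 // => s sT.
by rewrite hf ?(linmap0 (hy s)) ?scaler0 // cardsU1 sT add1n eqSS.
Qed.

Lemma kdiff_deg0 f : is_deg 0 f -> kdiff y f = 0.
Proof.
move=> hf; apply/ffunP => T; rewrite kdiffE ffunE big1 // => s sT.
by rewrite hf ?(linmap0 (hy s)) ?scaler0 // cardsU1 sT.
Qed.

(* d o d = 0 for commuting operators: the two ways of removing s and t from
   a set carry opposite signs. *)
Lemma kdiffK (cy : comm_ops y) f : kdiff y (kdiff y f) = 0.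
Proof.
apply/ffunP => T; rewrite ffunE [RHS]ffunE.
pose F (s t : 'I_n) := if (s \notin T) && (t \notin T) && (s != t) then
   ((-1) ^+ (nbelow T s + nbelow (s |: T) t) : k) *: y s (y t (f (t |: (s |: T))))
   else 0.
transitivity (\sum_s \sum_t F s t); last first.
  apply: sum_antisym => [s|s t]; first by rewrite /F eqxx andbF.
  rewrite /F; case tT: (t \notin T) => /=; last by rewrite ?andbF oppr0.
  case sT: (s \notin T) => /=; last by rewrite ?andbF oppr0.
  case: eqP => [->|/eqP ts]; first by rewrite eqxx oppr0.
  rewrite eq_sym ts setUCA (cy t s) -scaleNr; congr (_ *: _).
  apply: sign_oddD; rewrite !nbelowU1 //.
  have -> : forall a b c d : nat,
      (a + (b + c) + (b + (a + d)) = (a + b).*2 + (c + d))%N.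
    by move=> a b c d; rewrite -addnn; lia.
  by rewrite oddD odd_double addnC ltn_add_gtn // eq_sym.
rewrite big_mkcond; apply: eq_bigr => s _.
case sT: (s \in T) => /=; first by rewrite big1 // => t _; rewrite /F sT.
rewrite ffunE (linmap_sum (hy s)) scaler_sumr big_mkcond; apply: eq_bigr => t _.
rewrite /F sT in_setU1 /=; case: eqP => [->|/eqP ts]; first by rewrite eqxx andbF.
rewrite eq_sym ts andbT; case: (t \in T) => //=.
by rewrite (linmapZ (hy s)) scalerA -exprD.
Qed.

Definition wedge (i : 'I_n) f : chain V n :=
  [ffun S : {set 'I_n} =>
     if i \in S then ((-1) ^+ nbelow S i : k) *: f (S :\ i) else 0].

Lemma wedge_deg i p f : is_deg p f -> is_deg p.+1 (wedge i f).
Proof.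
move=> hf S hS; rewrite ffunE; case: ifP => // iS.
by rewrite hf ?scaler0 //; move: hS; rewrite (cardsD1 i S) iS add1n eqSS.
Qed.

Lemma wedge0 i : wedge i 0 = 0.
Proof. by apply/ffunP => S; rewrite !ffunE; case: ifP; rewrite ?scaler0. Qed.

(* The Koszul homotopy d(e_i /\ z) + e_i /\ d z = y_i z: multiplication by
   y_i is null-homotopic, hence acts by zero on Koszul homology. *)
Lemma koszul_homotopy i f : kdiff y (wedge i f) + wedge i (kdiff y f) = cmap (y i) f.
Proof.
apply/ffunP => T; rewrite !ffunE.
case iT: (i \in T); last first.
  rewrite addr0 (bigD1 i) /=; last by rewrite iT.
  rewrite big1 ?addr0.
    rewrite !ffunE setU11 setU1K ?iT // (linmapZ (hy i)) (nbelowU1 _ (negbT iT)).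
    by rewrite ltnn addn0 signrZK.
  move=> s /andP [sT si]; rewrite !ffunE in_setU1 eq_sym (negPf si) iT /=.
  by rewrite (linmap0 (hy s)) scaler0.
rewrite [X in _ + _ *: X](bigD1 i) /=; last by rewrite setD11.
have -> : #|[set t in T :\ i | (t < i)%N]| = nbelow T i.
  by rewrite (nbelowD1 i iT) ltnn addn0.
rewrite setD1K // scalerDr addrCA scalerA -expr2 sqrr_sign scale1r.
rewrite -[RHS]addr0; congr (_ + _).
rewrite [X in _ + _ *: X](eq_bigl (fun s => s \notin T)); last first.
  move=> s; rewrite !inE negb_and negbK; case: eqP => [->|] /=; by rewrite ?iT ?andbT.
rewrite scaler_sumr -big_split big1 // => s sT.
have si : s != i by apply: contraNneq sT => ->.
rewrite !ffunE in_setU1 iT orbT.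
have -> : (s |: T) :\ i = s |: (T :\ i).
  by apply/setP => u; rewrite !inE; case: eqP => // ->; rewrite eq_sym (negPf si).
rewrite [LHS]/= (linmapZ (hy s)) !scalerA -scalerDl -!exprD.
rewrite (@sign_oddD _ (nbelow T s + nbelow (s |: T) i) (nbelow T i + nbelow (T :\ i) s)).
  by rewrite addNr scale0r.
rewrite (nbelowU1 _ sT) (nbelowD1 s iT).
have -> : forall a b c d : nat, (a + c + (b + d) + (b + a) = (a + b).*2 + (c + d))%N.
  by move=> a b c d; rewrite -addnn; lia.
by rewrite oddD odd_double addnC ltn_add_gtn.
Qed.

Lemma kdiff_cmap_op (cy : comm_ops y) j f :
  kdiff y (cmap (y j) f) = cmap (y j) (kdiff y f).
Proof. by apply: (kdiff_cmap (hy j) (T := fun _ => True)) => // i v _; rewrite cy. Qed.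

End KoszulDifferential.

Section Submodules.
Variables (k : fieldType) (V : lmodType k) (n : nat) (y : 'I_n -> V -> V).
Variable T : V -> Prop.
Hypothesis hT : is_Psubmodule y T.

Lemma psub_sum (I : Type) (s : seq I) (P : pred I) (F : I -> V) :
  (forall i, P i -> T (F i)) -> T (\sum_(i <- s | P i) F i).
Proof. by case: hT => T0 TD _ _ hF; elim/big_ind: _. Qed.

Lemma psubB u v : T u -> T v -> T (u - v).
Proof. by case: hT => _ TD TZ _ hu hv; rewrite -scaleN1r; apply/TD/TZ. Qed.

Lemma psub_kdiff (f : chain V n) : (forall S, T (f S)) -> forall S, T (kdiff y f S).
Proof.
move=> hf S; rewrite kdiffE; apply: psub_sum => s _.
by case: hT => _ _ TZ Ty; apply/TZ/Ty.
Qed.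

End Submodules.

Section RelativeExactness.
Variables (k : fieldType) (n : nat).

Definition exact_in (U : lmodType k) (y : 'I_n -> U -> U) (T : U -> Prop) (q : nat) :=
  forall z : chain U n, is_deg q z -> kdiff y z = 0 -> (forall S, T (z S)) ->
  exists g : chain U n, [/\ is_deg q.+1 g, (forall S, T (g S)) & kdiff y g = z].

Lemma exact_in_eq (U : lmodType k) (y : 'I_n -> U -> U) (T T' : U -> Prop) q :
  (forall v, T v <-> T' v) -> exact_in y T q -> exact_in y T' q.
Proof.
move=> e E z zd zc zT; have [g [gd gT ge]] := E z zd zc (fun S => (e _).2 (zT S)).
by exists g; split => // S; apply/e.
Qed.

Lemma koszul_exactE (U : lmodType k) (y : 'I_n -> U -> U) :
  koszul_exact y <-> forall q, exact_in y (fun _ => True) q.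
Proof.
split => [h q z zd zc _ | h q z [zd zc]].
  by have [g [gd ge]] := h q z (conj zd zc); exists g.
by have [g [gd _ ge]] := h q z zd zc (fun _ => I); exists g.
Qed.

End RelativeExactness.

Section ExactSequences.
Variables (k : fieldType) (V W : lmodType k) (n : nat).
Variables (y : 'I_n -> V -> V) (w : 'I_n -> W -> W) (p : V -> W) (sg : W -> V).
Hypotheses (hy : lin_ops y) (cy : comm_ops y) (hp : linmap p) (hs : linmap sg)
  (psg : forall u, p (sg u) = u).

(* Lift a cycle's image, subtract the
   boundary of the lift, and bound the remaining cycle inside L. *)
Lemma exact_ext (T L : V -> Prop) q :
  is_Psubmodule y T -> (forall u, T (sg u)) ->
  (forall v, L v -> T v) -> (forall v, T v -> p v = 0 -> L v) ->
  (forall i v, T v -> p (y i v) = w i (p v)) ->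
  exact_in w (fun _ => True) q -> exact_in y L q -> exact_in y T q.
Proof.
move=> hT Tsg LT ker hi EW EL z zd zc zT.
have pzc : kdiff w (cmap p z) = 0.
  by rewrite (kdiff_cmap hp hi zT) zc; apply/ffunP => S; rewrite !ffunE (linmap0 hp).
have [g' [g'd _ g'e]] := EW (cmap p z) (cmap_deg hp zd) pzc (fun _ => I).
pose gh : chain V n := cmap sg g'.
have ghT : forall S, T (gh S) by move=> S; rewrite ffunE.
have pgh : cmap p gh = g' by apply/ffunP => S; rewrite !ffunE psg.
pose z' := z - kdiff y gh.
have z'T : forall S, T (z' S).
  move=> S; have := psub_kdiff hT ghT S; rewrite /z' !ffunE.
  move=> h; exact: (psubB hT (zT S) h).
have [w' [w'd w'L w'e]] : exists w' : chain V n,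
    [/\ is_deg q.+1 w', (forall S, L (w' S)) & kdiff y w' = z'].
  apply: EL.
  - move=> S hS; have := kdiff_deg hy (cmap_deg hs g'd) hS.
    by rewrite /z' !ffunE zd // => ->; rewrite subrr.
  - by rewrite (linmapB (kdiff_lin hy)) kdiffK // zc subrr.
  move=> S; apply: ker => //.
  have : cmap p z' = 0.
    by rewrite (linmapB (cmap_lin hp)) -(kdiff_cmap hp hi ghT) pgh g'e subrr.
  by move/ffunP/(_ S); rewrite !ffunE.
exists (gh + w'); split.
- by move=> S hS; rewrite ffunE (cmap_deg hs g'd) // w'd // addr0.
- by move=> S; rewrite ffunE; case: (hT) => _ TD _ _; apply: TD => //; apply: LT.
- by rewrite (linmapD (kdiff_lin hy)) w'e /z' addrC subrK.
Qed.

(* Quotient: if p : V -> W is a split surjection intertwining y and w with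
   kernel L, V is exact in degree q and L in degree q-1, then W is exact in
   degree q (the connecting map H_q(W) -> H_(q-1)(L) and H_q(V) -> H_q(W)
   in the long exact sequence). *)
Lemma exact_quotient (L : V -> Prop) q :
  (forall i v, p (y i v) = w i (p v)) ->
  (forall v, L v -> p v = 0) -> (forall v, p v = 0 -> L v) ->
  exact_in y (fun _ => True) q -> ((0 < q)%N -> exact_in y L q.-1) ->
  exact_in w (fun _ => True) q.
Proof.
move=> hi Lp pL EV EL z zd zc _.
have hiT : forall i v, True -> p (y i v) = w i (p v) by move=> i v _; apply: hi.
pose zh := cmap sg z.
have zhd : is_deg q zh := cmap_deg hs zd.
have pzh : cmap p zh = z by apply/ffunP => S; rewrite !ffunE psg.
have dzhL : forall S, L (kdiff y zh S).
  move=> S; apply: pL; move: (kdiff_cmap hp hiT (f := zh) (fun _ => I)).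
  by rewrite pzh zc => /ffunP/(_ S); rewrite !ffunE.
have [w' [w'd w'L w'e]] : exists w' : chain V n,
    [/\ is_deg q w', (forall S, L (w' S)) & kdiff y w' = kdiff y zh].
  case: q EV EL z zd zc zh zhd pzh dzhL => [|q] EV EL z zd zc zh zhd pzh dzhL.
    exists 0; split.
    - by move=> S _; rewrite ffunE.
    - by move=> S; apply: pL; rewrite ffunE (linmap0 hp).
    - by rewrite (kdiff_deg0 hy zhd) (kdiff0 hy).
  have [g [gd gL ge]] := EL isT (kdiff y zh) (kdiff_deg hy zhd) (kdiffK hy cy zh) dzhL.
  by exists g.
have hd : is_deg q (zh - w').
  by move=> S hS; rewrite ffunE zhd // ffunE w'd // subrr.
have hc : kdiff y (zh - w') = 0 by rewrite (linmapB (kdiff_lin hy)) w'e subrr.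
have [g [gd _ ge]] := EV (zh - w') hd hc (fun _ => I).
exists (cmap p g); split => //; first exact: cmap_deg.
rewrite (kdiff_cmap hp hiT (f := g) (fun _ => I)) ge (linmapB (cmap_lin hp)) pzh.
have -> : cmap p w' = 0 by apply/ffunP => S; rewrite !ffunE Lp.
by rewrite subr0.
Qed.

End ExactSequences.

Section ChainCondition.
Variables (k : fieldType) (n : nat).

Definition acc_in (U : lmodType k) (y : 'I_n -> U -> U) (T : U -> Prop) :=
  forall S : nat -> U -> Prop, (forall m, is_Psubmodule y (S m)) ->
  (forall m v, S m v -> S m.+1 v) -> (forall m v, S m v -> T v) ->
  exists N : nat, forall m, (N <= m)%N -> forall v, S m v <-> S N v.

Lemma noetherianE (U : lmodType k) (y : 'I_n -> U -> U) :
  noetherian_Pmodule y <-> is_Pmodule y /\ acc_in y (fun _ => True).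
Proof.
split=> -[hy A]; split=> // S hS Sinc; last exact: A.
by move=> _; apply: A.
Qed.

Lemma acc_in_sub (U : lmodType k) (y : 'I_n -> U -> U) (T T' : U -> Prop) :
  acc_in y T -> (forall v, T' v -> T v) -> acc_in y T'.
Proof. by move=> A h S h1 h2 h3; apply: A => // m v /h3; apply: h. Qed.

Lemma chain_mono (U : Type) (S : nat -> U -> Prop) :
  (forall m v, S m v -> S m.+1 v) -> forall m m' v, (m <= m')%N -> S m v -> S m' v.
Proof.
move=> hS m m' v /subnK <-; elim: (m' - m)%N => [|d IH] //= hv.
by rewrite addSn; apply/hS/IH.
Qed.

Section Extension.
Variables (V W : lmodType k) (y : 'I_n -> V -> V) (w : 'I_n -> W -> W) (p : V -> W).
Variables (T L : V -> Prop).
Hypotheses (hp : linmap p) (hL : is_Psubmodule y L)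
  (ker : forall v, T v -> p v = 0 -> L v)
  (hi : forall i v, T v -> p (y i v) = w i (p v)).

Lemma psubI (S : V -> Prop) : is_Psubmodule y S -> is_Psubmodule y (fun v => S v /\ L v).
Proof.
case=> S0 SD SZ Sy; case: hL => L0 LD LZ Ly; split => //.
- by move=> u v [? ?] [? ?]; split; [apply: SD | apply: LD].
- by move=> c u [? ?]; split; [apply: SZ | apply: LZ].
- by move=> i u [? ?]; split; [apply: Sy | apply: Ly].
Qed.

Lemma psub_image (S : V -> Prop) : is_Psubmodule y S -> (forall v, S v -> T v) ->
  is_Psubmodule w (fun u => exists2 v, S v & p v = u).
Proof.
case=> S0 SD SZ Sy ST; split.
- by exists 0; rewrite ?(linmap0 hp).
- by move=> _ _ [u ? <-] [v ? <-]; exists (u + v); rewrite ?(linmapD hp) //; apply: SD.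
- by move=> c _ [u ? <-]; exists (c *: u); rewrite ?(linmapZ hp) //; apply: SZ.
- by move=> i _ [u ? <-]; exists (y i u); [apply: Sy | apply/hi/ST].
Qed.

(* The ascending chain condition passes to extensions: once S_m /\ L and
   p(S_m) are stationary, so is S_m. *)
Lemma acc_ext : acc_in w (fun _ => True) -> acc_in y L -> acc_in y T.
Proof.
move=> AW AL S Ssub Sinc ST.
have [N1 h1] := AL (fun m v => S m v /\ L v) (fun m => psubI (Ssub m))
  (fun m v '(conj Sv Lv) => conj (Sinc m v Sv) Lv) (fun m v (h : S m v /\ L v) => h.2).
have [N2 h2] := AW (fun m u => exists2 v, S m v & p v = u)
  (fun m => psub_image (Ssub m) (ST m))
  (fun m u '(ex_intro2 v Sv pv) => ex_intro2 _ _ v (Sinc m v Sv) pv) (fun _ _ _ => I).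
exists (maxn N1 N2) => m hm v; split; last exact: chain_mono.
move=> Smv; have [u Su puv] := (h2 m (leq_trans (leq_maxr _ _) hm) (p v)).1
  (ex_intro2 _ _ v Smv erefl).
have Smu : S m u by apply: (chain_mono Sinc (leq_trans (leq_maxr _ _) hm)).
have Sdiff : S m (v - u) := psubB (Ssub m) Smv Smu.
have Ldiff : L (v - u) by apply: ker (ST m _ Sdiff) _; rewrite (linmapB hp) puv subrr.
have [SN1 _] := (h1 m (leq_trans (leq_maxl _ _) hm) (v - u)).1 (conj Sdiff Ldiff).
rewrite -(subrK u v); case: (Ssub (maxn N1 N2)) => _ SD _ _; apply: SD.
- exact: (chain_mono Sinc (leq_maxl _ _)).
- exact: (chain_mono Sinc (leq_maxr _ _)).
Qed.

End Extension.

Inductive gen (U : lmodType k) (z : 'I_n -> U -> U) (G : seq U) : U -> Prop :=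
| gen_base v : v \in G -> gen z G v
| gen0 : gen z G 0
| genD u v : gen z G u -> gen z G v -> gen z G (u + v)
| genZ c u : gen z G u -> gen z G (c *: u)
| genY i u : gen z G u -> gen z G (z i u).

Section FiniteGeneration.
Variables (U : lmodType k) (z : 'I_n -> U -> U).

Lemma gen_sub (G : seq U) : is_Psubmodule z (gen z G).
Proof. split; [exact: gen0 | exact: genD | exact: genZ | exact: genY]. Qed.

Lemma gen_min (G : seq U) (T : U -> Prop) :
  is_Psubmodule z T -> (forall v, v \in G -> T v) -> forall v, gen z G v -> T v.
Proof.
case=> T0 TD TZ Ty hG v; elim => [u /hG //|//|u w _ hu _ hw|c u _ hu|i u _ hu].
- exact: TD.
- exact: TZ.
- exact: Ty.
Qed.

Lemma gen_cons (G : seq U) u v : gen z G v -> gen z (u :: G) v.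
Proof.
apply: gen_min; first exact: gen_sub.
by move=> w wG; apply: gen_base; rewrite inE wG orbT.
Qed.

(* A submodule satisfying the ascending chain condition is finitely generated:
   otherwise picking elements outside the span of the previous ones would
   produce a strictly increasing chain. *)
Lemma acc_fg (T : U -> Prop) : is_Psubmodule z T -> acc_in z T ->
  exists G : seq U, (forall v, v \in G -> T v) /\ forall v, T v -> gen z G v.
Proof.
move=> hT A; apply: NNPP => nfg.
have hpick : forall G : seq U, exists v, (forall u, u \in G -> T u) -> T v /\ ~ gen z G v.
  move=> G; apply: NNPP => nv; apply: nfg; exists G.
  split=> [u uG|v Tv]; first by apply: NNPP => nTu; apply: nv; exists 0 => /(_ u uG).
  by apply: NNPP => ng; apply: nv; exists v.
pose pick G := proj1_sig (constructive_indefinite_description _ (hpick G)).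
have hp G : (forall u, u \in G -> T u) -> T (pick G) /\ ~ gen z G (pick G).
  exact: (proj2_sig (constructive_indefinite_description _ (hpick G))).
pose F := fix F m := if m is m'.+1 then pick (F m') :: F m' else [::].
have FT : forall m u, u \in F m -> T u.
  elim => [|m IH] u //=; rewrite inE => /orP [/eqP ->|]; last exact: IH.
  by case: (hp _ IH).
have [N hN] := A (fun m => gen z (F m)) (fun m => gen_sub (F m))
   (fun m v => @gen_cons (F m) (pick (F m)) v) (fun m => gen_min hT (FT m)).
have := (hN N.+1 (leqnSn N) (pick (F N))).1 (gen_base _ (mem_head _ _)).
by case: (hp _ (FT N)).
Qed.

End FiniteGeneration.
End ChainCondition.

Section SupportFiltration.
Variables (k : fieldType) (I : finType) (W : lmodType k) (n : nat).
Local Notation V := {ffun I -> W}.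

Definition supp (A : {set I}) (f : V) : Prop := forall c, c \notin A -> f c = 0.
Definition evb (b : I) (f : V) : W := f b.
Definition sgb (b : I) (u : W) : V := [ffun c => if c == b then u else 0].

Lemma evb_lin b : linmap (evb b).
Proof. by move=> c u v; rewrite /evb !ffunE. Qed.

Lemma sgb_lin b : linmap (sgb b).
Proof.
move=> c u v; apply/ffunP => d; rewrite !ffunE; case: eqP => _ //.
by rewrite scaler0 addr0.
Qed.

Lemma evb_sgb b u : evb b (sgb b u) = u.
Proof. by rewrite /evb ffunE eqxx. Qed.

Lemma supp0 f : supp set0 f -> f = 0.
Proof. by move=> h; apply/ffunP => c; rewrite ffunE h ?inE. Qed.

Lemma supp_kerD1 (A : {set I}) b f : supp A f -> evb b f = 0 -> supp (A :\ b) f.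
Proof. by move=> hf fb c; rewrite !inE negb_and negbK; case: eqP => [->|_ /hf]. Qed.

Lemma suppD1 (A : {set I}) b f : supp (A :\ b) f -> supp A f.
Proof. by move=> hf c cA; apply: hf; rewrite !inE negb_and cA orbT. Qed.

Variables (y : 'I_n -> V -> V) (w : 'I_n -> W -> W) (good : {set I} -> Prop).
Hypotheses (hy : lin_ops y) (cy : comm_ops y)
  (stab : forall A, good A -> is_Psubmodule y (supp A))
  (step : forall A, good A -> A != set0 -> exists2 b, b \in A &
      good (A :\ b) /\ forall i f, supp A f -> y i f b = w i (f b)).

Lemma supp_ind (P : {set I} -> Prop) :
  (forall A, good A -> A = set0 -> P A) ->
  (forall A b, good A -> b \in A -> good (A :\ b) ->
      (forall i f, supp A f -> y i f b = w i (f b)) -> P (A :\ b) -> P A) ->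
  forall A, good A -> P A.
Proof.
move=> h0 hS A; move: {2}#|A| (leqnn #|A|) => m; elim: m A => [|m IH] A hA gA.
  by apply: h0 => //; apply/eqP; rewrite -cards_eq0 -leqn0.
have [eA|nA] := eqVneq A set0; first exact: h0.
have [b bA [gb hb]] := step gA nA.
apply: (hS A b) => //; apply: IH => //.
by rewrite -ltnS (cardsD1 b A) bA add1n ltnS in hA.
Qed.

Lemma exact_supp q : exact_in w (fun _ => True) q ->
  forall A, good A -> exact_in y (supp A) q.
Proof.
move=> EW; apply: supp_ind.
  move=> A _ -> z zd zc zT; exists 0; split.
  - by move=> S _; rewrite ffunE.
  - by move=> S c _; rewrite !ffunE.
  - by rewrite (kdiff0 hy); apply/ffunP => S; rewrite ffunE (supp0 (zT S)).
move=> A b gA bA gb hb EL.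
apply: (exact_ext hy cy (evb_lin b) (sgb_lin b) (@evb_sgb b) (stab gA) _ (@suppD1 A b)
  (@supp_kerD1 A b) _ EW EL).
- by move=> u c cA; rewrite ffunE; case: eqP => // ec; rewrite ec bA in cA.
- by move=> i f hf; rewrite /evb hb.
Qed.

Lemma acc_supp : acc_in w (fun _ => True) -> forall A, good A -> acc_in y (supp A).
Proof.
move=> AW; apply: supp_ind.
  move=> A _ -> S Ssub _ ST; exists 0%N => m _ v.
  by split=> /[dup] /ST /supp0 ->; [case: (Ssub 0%N) | case: (Ssub m)].
move=> A b gA bA gb hb AL.
apply: (acc_ext (evb_lin b) (stab gb) (@supp_kerD1 A b) _ AW AL).
by move=> i f hf; rewrite /evb hb.
Qed.

End SupportFiltration.

Section KoszulHomology.
Variables (k : fieldType) (V : lmodType k) (n : nat) (y : 'I_n -> V -> V).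
Hypotheses (hy : lin_ops y) (cy : comm_ops y).

Local Notation Y := (fun i => cmap (y i)).

Lemma acc_chain : acc_in y (fun _ => True) -> acc_in Y (fun _ : chain V n => True).
Proof.
move=> AV; apply: (acc_in_sub (T := supp setT)); last by move=> f _ c; rewrite inE.
apply: (@acc_supp k _ V n _ y (fun _ => True)) => //.
- move=> A _; split.
  + by move=> c _; rewrite ffunE.
  + by move=> u v hu hv c cA; rewrite ffunE hu // hv // addr0.
  + by move=> c u hu d dA; rewrite ffunE hu // scaler0.
  + by move=> i u hu d dA; rewrite ffunE hu // (linmap0 (hy i)).
- by move=> A _ /set0Pn [b bA]; exists b => //; split => // i f _; rewrite ffunE.
Qed.

Lemma kcycle_sub p : is_Psubmodule Y (kcycle y p).
Proof.
have kl := kdiff_lin hy; split.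
- by split; [move=> S _; rewrite ffunE | exact: kdiff0].
- move=> u v [ud uc] [vd vc]; split; last by rewrite (linmapD kl) uc vc addr0.
  by move=> S hS; rewrite ffunE ud // vd // addr0.
- move=> c u [ud uc]; split; last by rewrite (linmapZ kl) uc scaler0.
  by move=> S hS; rewrite ffunE ud // scaler0.
- move=> i u [ud uc]; split; first exact: cmap_deg.
  by rewrite (kdiff_cmap_op hy cy) uc; apply/ffunP => S; rewrite !ffunE (linmap0 (hy i)).
Qed.

Definition span_mod_boundaries (G : seq (chain V n)) p (z : chain V n) :=
  exists (lam : 'I_(size G) -> k) (g : chain V n),
    is_deg p.+1 g /\ z = \sum_(j < size G) lam j *: G`_j + kdiff y g.

(* For G made of p-cycles this is a P-submodule: y_i maps each generator to
   a boundary by the Koszul homotopy. *)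
Lemma span_mod_boundaries_sub (G : seq (chain V n)) p :
  (forall v, v \in G -> kcycle y p v) -> is_Psubmodule Y (span_mod_boundaries G p).
Proof.
move=> GZ; have kl := kdiff_lin hy; split.
- exists (fun=> 0), 0; split; first by move=> S _; rewrite ffunE.
  by rewrite (kdiff0 hy) addr0 big1 // => j _; rewrite scale0r.
- move=> _ _ [l1 [g1 [g1d ->]]] [l2 [g2 [g2d ->]]].
  exists (fun j => l1 j + l2 j), (g1 + g2); split.
    by move=> S hS; rewrite ffunE g1d // g2d // addr0.
  rewrite (linmapD kl) addrACA -big_split /=; congr (_ + _).
  by apply: eq_bigr => j _; rewrite scalerDl.
- move=> c _ [l1 [g1 [g1d ->]]]; exists (fun j => c * l1 j), (c *: g1); split.
    by move=> S hS; rewrite ffunE g1d // scaler0.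
  rewrite (linmapZ kl) scalerDr scaler_sumr; congr (_ + _).
  by apply: eq_bigr => j _; rewrite scalerA.
move=> i _ [l1 [g1 [g1d ->]]].
exists (fun=> 0), (\sum_(j < size G) l1 j *: wedge i G`_j + cmap (y i) g1); split.
  move=> S hS; rewrite ffunE sum_ffunE ffunE g1d // (linmap0 (hy i)) addr0.
  rewrite big1 // => j _; rewrite ffunE.
  have [jd _] := GZ _ (mem_nth 0 (ltn_ord j)).
  by rewrite (wedge_deg i jd hS) scaler0.
rewrite [X in _ = X + _]big1 ?add0r; last by move=> j _; rewrite scale0r.
rewrite (linmapD kl) (kdiff_cmap_op hy cy) (linmapD (cmap_lin (hy i))); congr (_ + _).
rewrite (linmap_sum kl) (linmap_sum (cmap_lin (hy i))); apply: eq_bigr => j _.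
rewrite (linmapZ kl) (linmapZ (cmap_lin (hy i))); congr (_ *: _).
have [_ jc] := GZ _ (mem_nth 0 (ltn_ord j)).
by rewrite -(koszul_homotopy hy) jc wedge0 addr0.
Qed.

(* Koszul homology of a Noetherian module is finite dimensional in every
   degree: finitely many generators of the cycles span them modulo
   boundaries. *)
Lemma homology_findim_of_acc : acc_in y (fun _ => True) -> forall p, homology_findim y p.
Proof.
move=> AV p.
have [G [GZ Ggen]] := acc_fg (kcycle_sub p) (acc_in_sub (acc_chain AV) (fun _ _ => I)).
exists (size G), (fun j => G`_j); split; first by move=> j; apply/GZ/mem_nth.
move=> z /Ggen; apply: (gen_min (span_mod_boundaries_sub GZ)).
move=> v vG; exists (fun j : 'I_(size G) => (nat_of_ord j == index v G)%:R), 0.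
split; first by move=> S _; rewrite ffunE.
rewrite (kdiff0 hy) addr0 (bigD1 (Ordinal (etrans (index_mem v G) vG))) //=.
rewrite eqxx scale1r nth_index // big1 ?addr0 // => j /negPf jn.
have -> : (nat_of_ord j == index v G) = false.
  by apply/negbTE; apply: contraFN jn => /eqP e; apply/eqP/val_inj.
by rewrite scale0r.
Qed.

End KoszulHomology.

Section Monomials.
Variables (n r : nat).
Local Notation mono := (mono n r).

Definition mval (a : mono) (t : 'I_n) : nat := val (val a t).

Definition mdeg (a : mono) := (\sum_t mval a t)%N.

Lemma mono_succP i (a b : mono) :
  reflect (forall t, mval b t = (mval a t + (t == i))%N) (mono_succ i a b).
Proof. by apply: (iffP forallP) => h t; apply/eqP/h. Qed.

Lemma mono_inj (a b : mono) : (forall t, mval a t = mval b t) -> a = b.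
Proof. by move=> h; apply/val_inj/ffunP => t; apply/val_inj/h. Qed.

Lemma succ_uniq i (a c1 c2 : mono) : mono_succ i a c1 -> mono_succ i a c2 -> c1 = c2.
Proof. by move=> /mono_succP h1 /mono_succP h2; apply: mono_inj => t; rewrite h1 h2. Qed.

Lemma mdeg_succ i (a b : mono) : mono_succ i a b -> mdeg b = (mdeg a).+1.
Proof.
move=> /mono_succP h; rewrite /mdeg (eq_bigr _ (fun t _ => h t)) big_split /=.
rewrite -addn1; congr (_ + _)%N.
by rewrite (bigD1 i) //= eqxx big1 // => t /negPf ->.
Qed.

Definition dsucc i j (a b : mono) :=
  [forall t, mval b t == (mval a t + (t == i) + (t == j))%N].

Lemma dsuccC i j a b : dsucc i j a b = dsucc j i a b.
Proof. by apply: eq_forallb => t; rewrite addnAC. Qed.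

Lemma card_mid i j (a b : mono) :
  #|[pred c | mono_succ i c b && mono_succ j a c]| = dsucc i j a b.
Proof.
case: (boolP (dsucc i j a b)) => [/forallP hd|hd]; last first.
  rewrite (eq_card (B := pred0)) ?card0 // => c; rewrite !inE.
  apply/negbTE; apply: contra hd => /andP [/mono_succP h1 /mono_succP h2].
  by apply/forallP => t; rewrite h1 h2 addnAC.
have hbt t : mval b t = (mval a t + (t == j) + (t == i))%N.
  by rewrite (eqP (hd t)) addnAC.
have hcr t : (mval a t + (t == j) < r)%N.
  by apply: leq_ltn_trans (valP (val b t)); rewrite -/(mval b t) hbt leq_addr.
pose cf : {ffun 'I_n -> 'I_r} := [ffun t => Ordinal (hcr t)].
have hsum : (\sum_t (cf t : nat) < r)%N.
  apply: leq_ltn_trans (valP b); apply: leq_sum => t _.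
  by rewrite ffunE -/(mval b t) hbt leq_addr.
pose c : mono := exist _ cf hsum.
have hc1 : mono_succ i c b by apply/mono_succP => t; rewrite hbt /mval /= ffunE.
have hc2 : mono_succ j a c by apply/mono_succP => t; rewrite /mval /= ffunE.
rewrite (eq_card (B := pred1 c)) ?card1 // => c'; rewrite !inE.
by apply/andP/eqP => [[_ h2]|->]; [exact: succ_uniq h2 hc2 | split].
Qed.

Definition upclosed (A : {set mono}) :=
  forall i a b, a \in A -> mono_succ i a b -> b \in A.

Lemma upclosedT : upclosed setT.
Proof. by move=> *; rewrite inE. Qed.

(* An element b of minimal degree of a nonempty upward closed set A has no
   predecessor in A, and A :\ b is again upward closed. *)
Lemma upclosed_min A : upclosed A -> A != set0 -> exists2 b, b \in A &
  upclosed (A :\ b) /\ forall i a, mono_succ i a b -> a \notin A.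
Proof.
move=> uA /set0Pn [b0 b0A]; case: (arg_minnP mdeg b0A) => b bA bmin.
have nopred i a : mono_succ i a b -> a \notin A.
  by move=> ab; apply/negP => /bmin; rewrite (mdeg_succ ab) ltnn.
exists b => //; split => // i a c; rewrite !inE => /andP [ab aA] ac.
rewrite (uA i a c aA ac) andbT; apply: contraTneq aA => cb.
by apply: (nopred i); rewrite -cb.
Qed.

Variable hr : (0 < r)%N.
Definition m0f : {ffun 'I_n -> 'I_r} := [ffun _ => Ordinal hr].
Lemma m0P : (\sum_(i < n) (m0f i : nat) < r)%N.
Proof. by rewrite big1 // => i _; rewrite ffunE. Qed.
Definition m0 : mono := exist _ m0f m0P.

Lemma mdeg_m0 : mdeg m0 = 0%N.
Proof. by rewrite /mdeg big1 // => i _; rewrite /mval /= ffunE. Qed.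

Lemma no_pred_m0 i (a : mono) : ~~ mono_succ i a m0.
Proof. by apply/negP => /mdeg_succ; rewrite mdeg_m0. Qed.

Lemma upclosed_m0 : upclosed (setT :\ m0).
Proof.
move=> i a b _ ab; rewrite !inE andbT; apply: contraNneq (no_pred_m0 i a) => <-.
exact: ab.
Qed.

End Monomials.

Section MultiplicationByX.
Variables (k : fieldType) (M : lmodType k) (n r : nat).
Local Notation mono := (mono n r).
Local Notation Mr := (Mr M n r).

Lemma mulX_lin i : linmap (@mulX k M n r i).
Proof.
move=> c u v; apply/ffunP => b; rewrite !ffunE scaler_sumr -big_split.
by apply: eq_bigr => a _; rewrite !ffunE.
Qed.

Lemma mulXX i j (f : Mr) b : mulX i (mulX j f) b = \sum_a f a *+ dsucc i j a b.
Proof.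
rewrite ffunE (eq_bigr (fun c => \sum_(a | mono_succ j a c) f a)); last first.
  by move=> c _; rewrite ffunE.
rewrite big_mkcond /= (eq_bigr (fun c => \sum_a
   (if mono_succ i c b && mono_succ j a c then f a else 0))); last first.
  by move=> c _; case: ifP => h; [rewrite big_mkcond | rewrite big1].
rewrite exchange_big /=; apply: eq_bigr => a _.
by rewrite -big_mkcond /= sumr_const card_mid.
Qed.

Lemma mulX_comm i j (f : Mr) : mulX i (mulX j f) = mulX j (mulX i f).
Proof. by apply/ffunP => b; rewrite !mulXX; apply: eq_bigr => a _; rewrite dsuccC. Qed.

Variable x : 'I_n -> M -> M.
Hypotheses (hx : lin_ops x) (cx : comm_ops x).
Local Notation XR := (@xr k M n r x).

(* 1 (x) g on P/t^r (x) M, so that x_i^(r) = cwM (x i) - mulX i is a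
   difference of commuting operators. *)
Definition cwM (g : M -> M) (f : Mr) : Mr := [ffun b => g (f b)].

Lemma cwM_lin i : linmap (cwM (x i)).
Proof. by move=> c u v; apply/ffunP => b; rewrite !ffunE hx. Qed.

Lemma mulX_cwM i j (f : Mr) : mulX i (cwM (x j) f) = cwM (x j) (mulX i f).
Proof.
by apply/ffunP => b; rewrite !ffunE (linmap_sum (hx j)); apply: eq_bigr => a _; rewrite ffunE.
Qed.

Lemma xr_lin : lin_ops XR.
Proof.
move=> i c u v; rewrite /xr -!/(cwM _ _) (cwM_lin i) (mulX_lin i).
by rewrite scalerBr opprD addrACA.
Qed.

Lemma xr_comm : comm_ops XR.
Proof.
move=> i j f; rewrite /xr -!/(cwM _ _).
rewrite !(linmapB (cwM_lin _)) !(linmapB (mulX_lin _)) !mulX_cwM mulX_comm.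
have -> : cwM (x i) (cwM (x j) f) = cwM (x j) (cwM (x i) f).
  by apply/ffunP => b; rewrite !ffunE cx.
by rewrite !opprB !addrA [LHS]addrAC [RHS]addrAC; congr (_ + _); apply: addrAC.
Qed.

Lemma xr_at i (f : Mr) b :
  (forall a, mono_succ i a b -> f a = 0) -> XR i f b = x i (f b).
Proof. by move=> h; rewrite !ffunE big1 ?subr0 // => a /h. Qed.

Lemma upclosed_sub A : upclosed A -> is_Psubmodule XR (supp A).
Proof.
move=> uA; split.
- by move=> c _; rewrite ffunE.
- by move=> u v hu hv c cA; rewrite ffunE hu // hv // addr0.
- by move=> c u hu d dA; rewrite ffunE hu // scaler0.
- move=> i u hu c cA; rewrite xr_at ?hu ?(linmap0 (hx i)) //.
  by move=> a ac; apply: hu; apply: contra cA => aA; apply: uA aA ac.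
Qed.

End MultiplicationByX.

Section Shift.
Variables (k : fieldType) (V : lmodType k) (n : nat).
Variables (y : 'I_n -> V -> V) (a : 'I_n -> k).
Hypotheses (hy : lin_ops y) (cy : comm_ops y).

Lemma shift_lin : lin_ops (shift_ops y a).
Proof.
move=> i c u v; rewrite /shift_ops hy scalerDr !scalerA mulrC -scalerA.
by rewrite scalerBr addrACA opprD.
Qed.

Lemma shift_comm : comm_ops (shift_ops y a).
Proof.
move=> i j v; rewrite /shift_ops !(linmapB (hy _)) !(linmapZ (hy _)) cy.
rewrite !scalerBr !scalerA mulrC !opprB !addrA [LHS]addrAC [RHS]addrAC.
by congr (_ + _); apply: addrAC.
Qed.

Lemma sub_shift (S : V -> Prop) : is_Psubmodule y S -> is_Psubmodule (shift_ops y a) S.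
Proof.
case=> S0 SD SZ Sy; split => // i u hu.
by apply: SD; [apply: Sy | rewrite -scaleNr; apply: SZ].
Qed.

(* Conversely submodules for y - a are submodules for y, so y - a inherits
   the chain condition of y. *)
Lemma acc_shift (T : V -> Prop) : acc_in y T -> acc_in (shift_ops y a) T.
Proof.
move=> A S hS; apply: A => m; case: (hS m) => S0 SD SZ Sy; split => // i u hu.
have -> : y i u = shift_ops y a i u + a i *: u by rewrite /shift_ops subrK.
by apply: SD; [apply: Sy | apply: SZ].
Qed.

End Shift.

Section FiltrationOfMr.
Variables (k : fieldType) (M : lmodType k) (n r : nat) (x : 'I_n -> M -> M).
Local Notation XR := (@xr k M n r x).

(* M^(r) is Noetherian: filter all of M^(r) by upward closed supports. *)
Lemma xr_noetherian : noetherian_Pmodule x -> noetherian_Pmodule XR.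
Proof.
move=> /noetherianE [[hx cx] AM].
have AXR : acc_in XR (fun _ => True).
  apply: (acc_in_sub (T := supp [set: mono n r])); last by move=> f _ c; rewrite inE.
  refine (acc_supp (w := x) (good := @upclosed n r) _ _ AM (@upclosedT n r)).
  - by move=> A; apply: upclosed_sub.
  - move=> A uA nA; have [b bA [ub nopred]] := upclosed_min uA nA.
    by exists b => //; split => // i f hf; rewrite xr_at // => c /nopred /hf.
by apply/noetherianE; split; first split; [apply: xr_lin | apply: xr_comm |].
Qed.

Hypotheses (hx : lin_ops x) (cx : comm_ops x).

Variable a : 'I_n -> k.
Local Notation XRa := (shift_ops XR a).
Local Notation xa := (shift_ops x a).

Lemma shift_xr_at i (f : Mr M n r) b : XRa i f b = XR i f b - a i *: f b.
Proof. by rewrite /shift_ops !ffunE. Qed.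

Lemma shift_filtration A : upclosed A -> A != set0 ->
  exists2 b, b \in A & upclosed (A :\ b) /\
    forall i (f : Mr M n r), supp A f -> XRa i f b = xa i (f b).
Proof.
move=> uA nA; have [b bA [ub nopred]] := upclosed_min uA nA.
exists b => //; split => // i f hf.
by rewrite shift_xr_at xr_at // => c /nopred /hf.
Qed.

Lemma xr_exact_in q A : upclosed A -> exact_in xa (fun _ => True) q ->
  exact_in XRa (supp A) q.
Proof.
move=> uA Eq.
have stab B : upclosed B -> is_Psubmodule XRa (supp B).
  by move=> uB; apply/sub_shift/upclosed_sub.
exact: (exact_supp (shift_lin a (xr_lin hx)) (shift_comm a (xr_lin hx) (xr_comm hx cx))
  stab shift_filtration Eq uA).
Qed.

Lemma xr_exact_of_exact : koszul_exact xa -> koszul_exact XRa.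
Proof.
move/koszul_exactE => Ex; apply/koszul_exactE => q.
apply: (exact_in_eq (T := supp [set: mono n r])); first by move=> v; split => // _ c; rewrite inE.
exact (xr_exact_in (@upclosedT n r) (Ex q)).
Qed.

(* Conversely, project onto the coefficient of the monomial 1: its kernel is
   filtered by copies of M, so induction on the degree and exact_quotient
   give exactness of Kos(x - a, M). *)
Lemma exact_of_xr_exact : (0 < r)%N -> koszul_exact XRa -> koszul_exact xa.
Proof.
move=> hr /koszul_exactE Ex; apply/koszul_exactE.
have hi i (v : Mr M n r) : evb (m0 n hr) (XRa i v) = xa i (evb (m0 n hr) v).
  rewrite /evb shift_xr_at xr_at // => c.
  by rewrite (negbTE (no_pred_m0 _ _ _)).
have ker_m0 (v : Mr M n r) : evb (m0 n hr) v = 0 -> supp (setT :\ m0 n hr) v.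
  by move=> hv c; rewrite !inE andbT negbK => /eqP ->.
have m0_ker (v : Mr M n r) : supp (setT :\ m0 n hr) v -> evb (m0 n hr) v = 0.
  by move=> hv; apply: hv; rewrite !inE eqxx.
elim=> [|q IH]; apply: (exact_quotient (shift_lin a (xr_lin hx))
  (shift_comm a (xr_lin hx) (xr_comm hx cx)) (evb_lin _) (sgb_lin _) (@evb_sgb _ _ _ _)
  hi m0_ker ker_m0 (Ex _)) => // _.
exact (xr_exact_in (@upclosed_m0 n r hr) IH).
Qed.

End FiltrationOfMr.

Theorem lemma4p1 (k : closedFieldType) (M : lmodType k) (n : nat)
  (x : 'I_n -> M -> M) :
  noetherian_Pmodule x ->
  forall r : nat, (1 <= r)%N ->
    noetherian_Pmodule (@xr k M n r x) /\
    (forall a : 'I_n -> k,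
        taylor_spectrum (@xr k M n r x) a <-> taylor_spectrum x a) /\
    (forall (p : nat) (a : 'I_n -> k),
        homology_findim (shift_ops (@xr k M n r x) a) p).
Proof.
move=> NM r hr; have [[hx cx] _] := NM.
have NMr := xr_noetherian r NM; have /noetherianE [[hX cX] AX] := NMr.
split=> //; split=> [a|p a].
  by split; apply: contra_not; [apply: xr_exact_of_exact | apply: exact_of_xr_exact].
by apply: homology_findim_of_acc; [apply: shift_lin | apply: shift_comm | apply: acc_shift].
Qed.
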